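(* Let $p\geq1$, $\mu>0$, and let $g:\mathbb{R}^n\to\mathbb{R}\cup\{+\infty\}$ be convex. Let $\lambda^{\ast}$ be the optimal solution of $$\min_{\lambda\in\mathbb{R}^n}\Big\{g(\lambda)+\frac{\mu}{1+\frac1p}\lVert\lambda\rVert^{1+\frac1p}\Big\},$$ and suppose $\lambda^{\ast}\neq0$. Let $\lambda^0\in\mathbb{R}^n$ with $\lambda^0\neq0$ and generate $\lambda^1,\dots,\lambda^N$ by: $t^k=\lVert\lambda^k\rVert^{\frac1p-1}$ if $\lambda^k\neq0$, $t^k=0$ otherwise, and $\lambda^{k+1}=\arg\min_{\lambda\in\mathbb{R}^n}\{g(\lambda)+\frac{\mu}{2}t^k\lVert\lambda\rVert^2\}$. Suppose $\lVert\lambda^0\rVert\leq\lVert\lambda^{\ast}\rVert$ and $\lambda^k\neq\lambda^{\ast}$ for $k=1,2,\dots,N$. Then $$\lVert\lambda^N-\lambda^{\ast}\rVert\leq\Big(1-\frac1p\Big)\lVert\lambda^{\ast}\rVert\Big(e^{(1-\frac1p)^{N-1}\ln\frac{\lVert\lambda^{\ast}\rVert}{\lVert\lambda^0\rVert}}-1\Big)\leq\frac{\lVert\lambda^{\ast}\rVert}{\lVert\lambda^0\rVert}\big(\lVert\lambda^{\ast}\rVert-\lVert\lambda^0\rVert\big)\Big(1-\frac1p\Big)^{N}.$$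
   Context: $\lVert\cdot\rVert$ is the Euclidean norm. The minimizers in the iteration are assumed to exist. *)

From HB Require Import structures.
From mathcomp Require Import all_boot all_order all_algebra.
From mathcomp Require Import all_classical all_reals all_analysis.
Set Implicit Arguments. Unset Strict Implicit. Unset Printing Implicit Defensive.
Import Order.TTheory GRing.Theory Num.Theory.
Local Open Scope ring_scope.

Definition enorm {R : realType} {n : nat} (x : 'rV[R]_n) : R :=
  Num.sqrt (\sum_(i < n) x ord0 i ^+ 2).

Definition convex_ext {R : realType} {n : nat} (g : 'rV[R]_n -> \bar R) : Prop :=
  forall (x y : 'rV[R]_n) (t : R), 0 < t < 1 ->
    let z := t *: x + (1 - t) *: y in (g z <= t%:E * g x + (1 - t)%:E * g y)%E.

Definition main_obj {R : realType} {n : nat} (g : 'rV[R]_n -> \bar R) (mu p : R)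
  (l : 'rV[R]_n) : \bar R :=
  (g l + (mu / (1 + p^-1) * (enorm l `^ (1 + p^-1)))%:E)%E.

Definition tweight {R : realType} {n : nat} (p : R) (l : 'rV[R]_n) : R :=
  if l != 0 then enorm l `^ (p^-1 - 1) else 0.

Definition sub_obj {R : realType} {n : nat} (g : 'rV[R]_n -> \bar R) (mu t : R)
  (l : 'rV[R]_n) : \bar R :=
  (g l + (mu / 2 * t * enorm l ^+ 2)%:E)%E.

Definition is_minimizer {R : realType} {n : nat} (F : 'rV[R]_n -> \bar R)
  (x : 'rV[R]_n) : Prop := forall y, (F x <= F y)%E.

From HB Require Import structures.
From mathcomp Require Import all_boot all_order all_algebra.
From mathcomp Require Import all_classical all_reals all_analysis.
From mathcomp Require Import ring lra.
Import Order.TTheory GRing.Theory Num.Theory.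
Local Open Scope ring_scope.

(* Both [lstar] and each iterate [lam k.+1] minimize [g] plus a quadratic: the
   iterate with weight [t_k = |lam k|^(1/p - 1)] by construction, and [lstar]
   with weight [s = |lstar|^(1/p - 1)], because this quadratic majorizes the
   (1 + 1/p)-power term at [|lstar|] (concavity of x |-> x^((1 + 1/p)/2)).
   Adding the two variational inequalities of the convex [g] gives
   <a, b - a> + c <b, a - b> >= 0 for a = lam k.+1, b = lstar and
   c = s / t_k = (|lam k| / |lstar|)^(1 - 1/p) <= 1, and Cauchy-Schwarz turns
   this into c |b| <= |a| <= |b| and |a - b| <= (1 - c) |b|.  So
   ln (|lstar| / |lam k|) contracts by the factor 1 - 1/p at every step, and
   1 - exp (-x) <= x <= exp x - 1 together with the convexity of exp yield
   the two bounds. *)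

Section RealFacts.
Context {R : realType}.
Implicit Types a x y : R.

Lemma invr_itv01 {x} : 1 <= x -> 0 <= x^-1 <= 1.
Proof.
by move=> x1; have x_gt0 := lt_le_trans ltr01 x1; rewrite invr_ge0 ltW //= invf_le1.
Qed.

Lemma expR_convex x y a : 0 <= a <= 1 ->
  expR (a * x + (1 - a) * y) <= a * expR x + (1 - a) * expR y.
Proof. by case/andP=> a0 a1; exact: (convex_expR (Itv01 a0 a1) x y). Qed.

Lemma powR_amgm {a x y} : 0 <= a <= 1 -> 0 <= x -> 0 < y ->
  x `^ a * y `^ (1 - a) <= a * x + (1 - a) * y.
Proof.
move=> a01 x_ge0 y0; have /andP[a0 a1] := a01.
have [x0|x0] := eqVneq x 0.
  rewrite x0; have [->|a_neq0] := eqVneq a 0.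
    by rewrite powRr0 subr0 (powRr1 (ltW y0)) mul1r mul0r add0r.
  by rewrite powR0 // mul0r mulr0 add0r mulr_ge0 // ?subr_ge0 // ltW.
have {x0 x_ge0}x0 : 0 < x by rewrite lt_def x0.
rewrite /powR !gt_eqF // -expRD.
by have := expR_convex (ln x) (ln y) a a01; rewrite !lnK ?posrE.
Qed.

Lemma powR_le_tangent {a x y} : 0 <= a <= 1 -> 0 <= x -> 0 < y ->
  x `^ a <= y `^ a + a * y `^ (a - 1) * (x - y).
Proof.
move=> a01 x0 y0; have ya_gt0 : 0 < y `^ (1 - a) by rewrite powR_gt0.
rewrite -(ler_pM2r ya_gt0) (le_trans (powR_amgm a01 x0 y0)) //.
have yD r s : y `^ r * y `^ s = y `^ (r + s) by rewrite powRD // (gt_eqF y0) implybT.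
have yy : y `^ (a - 1) * y `^ (1 - a) = 1 by rewrite yD addrC addrA subrK subrr powRr0.
have y1 : y `^ a * y `^ (1 - a) = y by rewrite yD addrC subrK powRr1 // ltW.
rewrite [leRHS]mulrDl y1 mulrAC -(mulrA a) yy mulr1; lra.
Qed.

Lemma powR_quadratic_majorant {al r b : R} :
  0 <= al <= 1 -> 0 <= r -> 0 < b ->
  r `^ (1 + al) / (1 + al) - b `^ (1 + al) / (1 + al)
    <= b `^ (al - 1) / 2 * (r ^+ 2 - b ^+ 2).
Proof.
move=> /andP[al0 al1] r0 b0; set a := (1 + al) / 2.
have a01 : 0 <= a <= 1 by rewrite divr_ge0 ?ler_pdivrMr //=; lra.
have sqrE x e : 0 <= x -> (x ^+ 2) `^ e = x `^ (2 * e).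
  by move=> x0; rewrite powRrM powR_mulrn.
have := powR_le_tangent a01 (sqr_ge0 r) (exprn_gt0 2 b0).
have e1 : 2 * a = 1 + al by rewrite /a; field.
have e2 : 2 * (a - 1) = al - 1 by rewrite /a; field.
rewrite !sqrE ?(ltW b0) // e1 e2 /a => tangent.
by rewrite -mulrBl ler_pdivrMr; lra.
Qed.

Lemma expRM_sub1_le a x : 0 <= a <= 1 -> expR (a * x) - 1 <= a * (expR x - 1).
Proof. by move=> a01; have := expR_convex x 0 a a01; rewrite mulr0 addr0 expR0; lra. Qed.

Lemma le0_of_le_mulr_small x c :
  0 <= c -> (forall e, 0 < e < 1 -> x <= c * e) -> x <= 0.
Proof.
move=> c0 H; rewrite leNgt; apply/negP => x0.
have cx_gt0 : 0 < 2 * (c + x) by rewrite mulr_gt0 // ltr_wpDl.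
have e01 : 0 < x / (2 * (c + x)) < 1 by rewrite divr_gt0 //= ltr_pdivrMr // mul1r; lra.
move: (H _ e01); rewrite mulrA ler_pdivlMr //; nra.
Qed.

End RealFacts.

Section Euclidean.
Context {R : realType} {n : nat}.
Implicit Types u v w : 'rV[R]_n.

Definition dot u v := \sum_(i < n) u ord0 i * v ord0 i.

Lemma dotC u v : dot u v = dot v u.
Proof. by apply: eq_bigr => i _; rewrite mulrC. Qed.

Lemma dotDr u v w : dot u (v + w) = dot u v + dot u w.
Proof. by rewrite /dot -big_split; apply: eq_bigr => i _; rewrite !mxE mulrDr. Qed.

Lemma dotZr u v c : dot u (c *: v) = c * dot u v.
Proof. by rewrite /dot mulr_sumr; apply: eq_bigr => i _; rewrite !mxE mulrCA. Qed.

Lemma dotNr u v : dot u (- v) = - dot u v.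
Proof. by rewrite -scaleN1r dotZr mulN1r. Qed.

Lemma dotBr u v w : dot u (v - w) = dot u v - dot u w.
Proof. by rewrite dotDr dotNr. Qed.

Lemma dotDl u v w : dot (u + v) w = dot u w + dot v w.
Proof. by rewrite dotC dotDr !(dotC w). Qed.

Lemma dotZl u v c : dot (c *: u) v = c * dot u v.
Proof. by rewrite dotC dotZr dotC. Qed.

Lemma dotBl u v w : dot (u - v) w = dot u w - dot v w.
Proof. by rewrite dotC dotBr !(dotC w). Qed.

Lemma dot0l u : dot 0 u = 0.
Proof. by rewrite -(scale0r 0) dotZl mul0r. Qed.

Lemma dot_ge0 u : 0 <= dot u u.
Proof. by apply: sumr_ge0 => i _; rewrite -expr2 sqr_ge0. Qed.

Lemma dot_eq0 u : (dot u u == 0) = (u == 0).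
Proof.
apply/idP/eqP => [/eqP u0|->]; last by rewrite dot0l.
apply/rowP => i; rewrite mxE; apply/eqP; rewrite -sqrf_eq0 expr2.
by apply/eqP/(psumr_eq0P _ u0) => // j _; rewrite -expr2 sqr_ge0.
Qed.

Lemma enorm_sqr u : enorm u ^+ 2 = dot u u.
Proof. by rewrite sqr_sqrtr; [apply: eq_bigr => i _; rewrite expr2 | apply: dot_ge0]. Qed.

Lemma enorm_ge0 u : 0 <= enorm u.
Proof. exact: sqrtr_ge0. Qed.

Lemma enorm_eq0 u : (enorm u == 0) = (u == 0).
Proof. by rewrite -dot_eq0 -enorm_sqr sqrf_eq0. Qed.

Lemma enorm0 : enorm (0 : 'rV[R]_n) = 0.
Proof. by apply/eqP; rewrite enorm_eq0. Qed.

Lemma enorm_gt0 u : (0 < enorm u) = (u != 0).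
Proof. by rewrite lt_def enorm_eq0 enorm_ge0 andbT. Qed.

Lemma enormN u : enorm (- u) = enorm u.
Proof. by rewrite /enorm; under eq_bigr do rewrite mxE sqrrN. Qed.

Lemma dot_le_enorm u v : dot u v <= enorm u * enorm v.
Proof.
have [->|u0] := eqVneq u 0; first by rewrite dot0l enorm0 mul0r.
have [->|v0] := eqVneq v 0; first by rewrite dotC dot0l enorm0 mulr0.
have := dot_ge0 (enorm v *: u - enorm u *: v).
rewrite !(dotBl, dotBr, dotZl, dotZr) (dotC v u) -!enorm_sqr => h.
have uv_gt0 : 0 < enorm u * enorm v by rewrite mulr_gt0 ?enorm_gt0.
by rewrite -subr_ge0 -(pmulr_rge0 _ uv_gt0); lra.
Qed.

Lemma dot_mono_norm_bounds {a b c} : 0 <= c <= 1 ->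
  0 <= dot a (b - a) + c * dot b (a - b) -> c * enorm b <= enorm a <= enorm b.
Proof.
case/andP=> c0 c1; rewrite !(dotBr, dotBl) -!enorm_sqr (dotC b a) => mono.
have := dot_le_enorm a b; have A0 := enorm_ge0 a; have B0 := enorm_ge0 b.
move: (enorm a) (enorm b) (dot a b) A0 B0 mono => A B D A0 B0 mono CS.
have cCS := ler_wpM2l c0 CS.
have key : (A - c * B) * (A - B) <= 0 by lra.
have cB_le : c * B <= B by rewrite ler_piMl.
apply/andP; split; rewrite leNgt; apply/negP => lt.
  have : 0 < (A - c * B) * (A - B).
    by rewrite -mulrNN !opprB; apply: mulr_gt0; rewrite subr_gt0 // (lt_le_trans lt).
  lra.
have : 0 < (A - c * B) * (A - B).
  by apply: mulr_gt0; rewrite subr_gt0 // (le_lt_trans cB_le lt).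
lra.
Qed.

Lemma dot_mono_dist_le {a b c} : 0 <= c <= 1 ->
  0 <= dot a (b - a) + c * dot b (a - b) -> enorm (a - b) <= (1 - c) * enorm b.
Proof.
case/andP=> c0 c1 mono.
have CS : dot b (b - a) <= enorm b * enorm (a - b).
  by rewrite -(enormN (a - b)) opprB dot_le_enorm.
have E2 : enorm (a - b) ^+ 2 <= (1 - c) * dot b (b - a).
  rewrite enorm_sqr; move: mono; rewrite !(dotBr, dotBl) (dotC b a); nra.
have [->|E0] := eqVneq (enorm (a - b)) 0.
  by rewrite mulr_ge0 ?enorm_ge0 // subr_ge0.
have E_gt0 : 0 < enorm (a - b) by rewrite lt_def E0 enorm_ge0.
by rewrite -(ler_pM2r E_gt0) -expr2 -mulrA (le_trans E2) // ler_wpM2l // subr_ge0.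
Qed.

End Euclidean.

Section Minimizers.
Context {R : realType} {n : nat}.
Implicit Types (g : 'rV[R]_n -> \bar R) (a y : 'rV[R]_n).

Lemma minimizer_fin_num {g} {h : 'rV[R]_n -> R} {a} :
  (forall x, g x != -oo%E) -> (exists x, g x != +oo%E) ->
  is_minimizer (fun x => g x + (h x)%:E)%E a -> g a \is a fin_num.
Proof.
move=> gNy [x gx] /(_ x); rewrite fin_numE gNy /=.
by case: (g a) => //; case: (g x) gx.
Qed.

Lemma sub_obj_min_variational {g mu t a y} {ga gy : R} :
  0 <= mu * t -> convex_ext g -> is_minimizer (sub_obj g mu t) a ->
  g a = ga%:E -> g y = gy%:E -> ga - gy <= mu * t * dot a (y - a).
Proof.
(* Test the minimality of [a] against [a + th (y - a)] and let [th] tend to 0. *)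
move=> mut_ge0 g_cvx a_min ga_E gy_E; rewrite -subr_le0.
apply: (@le0_of_le_mulr_small _ _ (mu / 2 * t * dot (y - a) (y - a))).
  by apply: mulr_ge0 (dot_ge0 _); rewrite mulrAC mulr_ge0 // invr_ge0.
move=> th /[dup] th01 /andP[th0 _].
have := g_cvx y a th th01; have := a_min (th *: y + (1 - th) *: a).
rewrite /sub_obj ga_E gy_E.
case: (g _) => [r| |] //=.
rewrite -!EFinM -!EFinD !lee_fin !enorm_sqr.
rewrite !(dotBl, dotBr, dotDl, dotDr, dotZl, dotZr) (dotC y a) => a_le z_le.
by rewrite -subr_le0 -(pmulr_rle0 _ th0); lra.
Qed.

Lemma main_obj_min_sub_obj_min {g mu p b} :
  1 <= p -> 0 <= mu -> b != 0 -> (forall x, g x != -oo%E) ->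
  is_minimizer (main_obj g mu p) b ->
  is_minimizer (sub_obj g mu (enorm b `^ (p^-1 - 1))) b.
Proof.
move=> p1 mu0 b0 gNy b_min y; have := b_min y; rewrite /main_obj /sub_obj.
have b_gt0 : 0 < enorm b by rewrite enorm_gt0.
have := ler_wpM2l mu0 (powR_quadratic_majorant (invr_itv01 p1) (enorm_ge0 y) b_gt0).
case: (g y) (gNy y) => [gy| |] // _; last by rewrite addye ?leey.
case: (g b) (gNy b) => [gb| |] // _ model; rewrite !lee_fin; lra.
Qed.

Lemma sub_obj_min_monotone {g mu t s a b} : 0 < mu -> 0 < t -> 0 < s ->
  (forall x, g x != -oo%E) -> (exists x, g x != +oo%E) -> convex_ext g ->
  is_minimizer (sub_obj g mu t) a -> is_minimizer (sub_obj g mu s) b ->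
  0 <= dot a (b - a) + s / t * dot b (a - b).
Proof.
move=> mu_gt0 t_gt0 s_gt0 gNy g_proper g_cvx a_min b_min.
have /fineK gaE := minimizer_fin_num gNy g_proper a_min.
have /fineK gbE := minimizer_fin_num gNy g_proper b_min.
have vi_a := sub_obj_min_variational (ltW (mulr_gt0 mu_gt0 t_gt0)) g_cvx a_min
  (esym gaE) (esym gbE).
have vi_b := sub_obj_min_variational (ltW (mulr_gt0 mu_gt0 s_gt0)) g_cvx b_min
  (esym gbE) (esym gaE).
rewrite -(pmulr_rge0 _ (mulr_gt0 mu_gt0 t_gt0)) mulrDr.
rewrite (_ : mu * t * (s / t * _) = mu * s * dot b (a - b)); first lra.
by field; rewrite gt_eqF.
Qed.
End Minimizers.

Section Iteration.
Context {R : realType} {n : nat}.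
Context {p mu : R} {g : 'rV[R]_n -> \bar R} {lstar : 'rV[R]_n}.
Hypotheses (p_ge1 : 1 <= p) (mu_gt0 : 0 < mu).
Hypotheses (g_gtNy : forall x, g x != -oo%E) (g_proper : exists x, g x != +oo%E).
Hypothesis g_cvx : convex_ext g.
Hypotheses (lstar_min : is_minimizer (main_obj g mu p) lstar) (lstar_neq0 : lstar != 0).

Local Notation B := (enorm lstar).

Lemma iterate_step {a b : 'rV[R]_n} : a != 0 -> enorm a <= B ->
  is_minimizer (sub_obj g mu (tweight p a)) b ->
  [/\ b != 0, enorm b <= B,
      ln (B / enorm b) <= (1 - p^-1) * ln (B / enorm a)
    & enorm (b - lstar) <= (1 - p^-1) * ln (B / enorm a) * B].
Proof.
move=> a_neq0 aB b_min.
have a_gt0 : 0 < enorm a by rewrite enorm_gt0.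
have B_gt0 : 0 < B by rewrite enorm_gt0.
set L := ln (B / enorm a); set t := tweight p a; set s := B `^ (p^-1 - 1).
have L_ge0 : 0 <= L by rewrite ln_ge0 // ler_pdivlMr // mul1r.
have q_ge0 : 0 <= 1 - p^-1 by have /andP[_ ?] := invr_itv01 p_ge1; lra.
have t_gt0 : 0 < t by rewrite /t /tweight a_neq0 powR_gt0.
have s_gt0 : 0 < s by rewrite powR_gt0.
have st : s / t = expR (- ((1 - p^-1) * L)).
  rewrite /s /t /tweight a_neq0 /powR !gt_eqF // -expRB -mulrBr -ln_div ?posrE //.
  by rewrite -opprB mulNr.
have st_gt0 : 0 < s / t by rewrite divr_gt0.
have c01 : 0 <= s / t <= 1 by rewrite ltW //= st expR_le1 oppr_le0 mulr_ge0.
have lstar_sub_min : is_minimizer (sub_obj g mu s) lstar.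
  exact: main_obj_min_sub_obj_min p_ge1 (ltW mu_gt0) lstar_neq0 g_gtNy lstar_min.
have mono := sub_obj_min_monotone mu_gt0 t_gt0 s_gt0 g_gtNy g_proper g_cvx
  b_min lstar_sub_min.
have /andP[lb ub] := dot_mono_norm_bounds c01 mono.
have b_gt0 : 0 < enorm b by rewrite (lt_le_trans _ lb) // mulr_gt0.
split => //; first by rewrite -enorm_gt0.
  have : ln (s / t * B) <= ln (enorm b) by rewrite ler_ln ?posrE // mulr_gt0.
  by rewrite lnM ?posrE // st expRK ln_div ?posrE //; lra.
apply: (le_trans (dot_mono_dist_le c01 mono)); rewrite ler_pM2r //.
by have := expR_ge1Dx (- ((1 - p^-1) * L)); rewrite st; lra.
Qed.

Context {lam : nat -> 'rV[R]_n} {N : nat}.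
Hypothesis lam_min :
  forall k, (k < N)%N -> is_minimizer (sub_obj g mu (tweight p (lam k))) (lam k.+1).
Hypotheses (lam0_neq0 : lam 0%N != 0) (lam0_le : enorm (lam 0%N) <= B).

Lemma iterates_ln_ratio_le k : (k < N)%N ->
  [/\ lam k != 0, enorm (lam k) <= B
    & ln (B / enorm (lam k)) <= (1 - p^-1) ^+ k * ln (B / enorm (lam 0%N))].
Proof.
elim: k => [|k IH] k_lt; first by rewrite expr0 mul1r.
have [k_neq0 k_le k_ln] := IH (ltnW k_lt).
have [-> -> step _] := iterate_step k_neq0 k_le (lam_min _ (ltnW k_lt)).
split=> //; rewrite (le_trans step) // exprS -mulrA ler_wpM2l //.
by have /andP[_ ?] := invr_itv01 p_ge1; lra.
Qed.
End Iteration.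

Theorem theoremA1 (R : realType) (n : nat) (p mu : R)
  (g : 'rV[R]_n -> \bar R) (lstar : 'rV[R]_n) (lam : nat -> 'rV[R]_n) (N : nat) :
  1 <= p -> 0 < mu ->
  (forall x, g x != -oo%E) -> (exists x, g x != +oo%E) ->
  convex_ext g ->
  is_minimizer (main_obj g mu p) lstar ->
  lstar != 0 ->
  lam 0%N != 0 ->
  (forall k, (k < N)%N -> is_minimizer (sub_obj g mu (tweight p (lam k))) (lam k.+1)) ->
  (1 <= N)%N ->
  enorm (lam 0%N) <= enorm lstar ->
  (forall k, (1 <= k <= N)%N -> lam k != lstar) ->
  enorm (lam N - lstar)
    <= (1 - p^-1) * enorm lstar *
       (expR ((1 - p^-1) ^+ (N.-1) * ln (enorm lstar / enorm (lam 0%N))) - 1)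
  /\
  (1 - p^-1) * enorm lstar *
       (expR ((1 - p^-1) ^+ (N.-1) * ln (enorm lstar / enorm (lam 0%N))) - 1)
    <= enorm lstar / enorm (lam 0%N) * (enorm lstar - enorm (lam 0%N)) * (1 - p^-1) ^+ N.
Proof.
move=> p_ge1 mu_gt0 g_gtNy g_proper g_cvx lstar_min lstar_neq0 lam0_neq0 lam_min N_ge1
  lam0_le _.
have step := iterate_step p_ge1 mu_gt0 g_gtNy g_proper g_cvx lstar_min lstar_neq0.
have iter := iterates_ln_ratio_le p_ge1 mu_gt0 g_gtNy g_proper g_cvx lstar_min lstar_neq0.
have N1_lt : (N.-1 < N)%N by rewrite prednK.
have [N1_neq0 N1_le N1_ln] := iter lam N lam_min lam0_neq0 lam0_le N.-1 N1_lt.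
have [_ _ _] := step (lam N.-1) (lam N.-1.+1) N1_neq0 N1_le (lam_min _ N1_lt).
rewrite prednK // => distN.
set B := enorm lstar in distN N1_ln *; set n0 := enorm (lam 0%N) in N1_ln lam0_le *.
set q := 1 - p^-1 in distN N1_ln *; set w := q ^+ N.-1 in N1_ln *.
have /andP[pV_ge0 pV_le1] := invr_itv01 p_ge1.
have q_ge0 : 0 <= q by rewrite /q; lra.
have w01 : 0 <= w <= 1 by rewrite exprn_ge0 // exprn_ile1 // /q; lra.
have qB_ge0 : 0 <= q * B by rewrite mulr_ge0 ?enorm_ge0.
split.
  rewrite (le_trans distN) // mulrAC ler_wpM2l // (le_trans N1_ln) //.
  by have := expR_ge1Dx (w * ln (B / n0)); lra.
have n0_gt0 : 0 < n0 by rewrite enorm_gt0.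
have -> : B / n0 * (B - n0) * q ^+ N = q * B * (w * (B / n0 - 1)).
  by rewrite -(prednK N_ge1) exprS -/w; field; rewrite gt_eqF.
rewrite ler_wpM2l //; have := expRM_sub1_le w (ln (B / n0)) w01.
by rewrite lnK // posrE divr_gt0 // enorm_gt0.
Qed.
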